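(* Let $G$ be a graph of order $n\geq 3$ such that $d(u)+d(v)\geq n-1$ for every pair of non-adjacent vertices $u,v\in V(G)$. Then $prc(G)=\chi'(G)$.
   Context: A path in an edge-coloured graph is a rainbow path if its edges receive pairwise distinct colours. The proper rainbow connection number $prc(G)$ of a connected graph is the minimum number of colours in a proper edge-colouring (adjacent edges get distinct colours) such that every two distinct vertices are joined by a rainbow path. $\chi'(G)$ is the chromatic index; $d(u)$ is the degree of $u$. *)

From mathcomp Require Import all_boot.
Set Implicit Arguments. Unset Strict Implicit. Unset Printing Implicit Defensive.

Section Graphs.
Variable T : finType.
Implicit Types (e : rel T) (c : T -> T -> nat).

Definition simple_graph e : Prop := symmetric e /\ irreflexive e.

Definition deg e (u : T) : nat := #|[set v | e u v]|.

Definition edge_colouring e (k : nat) c : Prop :=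
  forall x y, e x y -> c x y = c y x /\ c x y < k.

Definition proper_colouring e c : Prop :=
  forall x y z, e x y -> e x z -> y != z -> c x y != c x z.

(* a rainbow path from u to v: the path u = x0, x1, ..., xm = v has pairwise
   distinct vertices and its edges have pairwise distinct colours *)
Definition rainbow_path e c (u v : T) : Prop :=
  exists p : seq T, [/\ path e u p, last u p = v, uniq (u :: p) &
                        uniq (pairmap c u p)].

Definition rainbow_connected e c : Prop :=
  forall u v, u != v -> rainbow_path e c u v.

Definition proper_k_colourable e (k : nat) : Prop :=
  exists c, edge_colouring e k c /\ proper_colouring e c.

Definition proper_rainbow_k_colourable e (k : nat) : Prop :=
  exists c, [/\ edge_colouring e k c, proper_colouring e c & rainbow_connected e c].

End Graphs.

Definition is_least (P : nat -> Prop) (n : nat) : Prop :=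
  P n /\ forall m, P m -> n <= m.

Definition is_chromatic_index (T : finType) (e : rel T) (k : nat) : Prop :=
  is_least (proper_k_colourable e) k.
Definition is_proper_rainbow_connection_number (T : finType) (e : rel T) (k : nat) : Prop :=
  is_least (proper_rainbow_k_colourable e) k.

(* Ore's condition forces two non-adjacent vertices u, v to have a common
   neighbour: otherwise u, v and their disjoint neighbourhoods are distinct
   vertices, so d(u) + d(v) <= n - 2.  Hence every two vertices are joined by
   a path of length at most 2, and such a path is rainbow in any proper
   edge-colouring, its two edges being adjacent.  So the proper colourings
   with k colours are exactly the rainbow-connecting ones and prc(G) = chi'(G). *)

From Stdlib Require Import Classical.
From mathcomp Require Import all_boot zify.

Set Implicit Arguments.
Unset Strict Implicit.
Unset Printing Implicit Defensive.

Lemma is_least_exists (P : nat -> Prop) n : P n -> exists m, is_least P m.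
Proof.
elim/ltn_ind: n => n IH Pn.
have [[m [lt_mn Pm]] | no_smaller] := classic (exists m, m < n /\ P m).
  exact: IH Pm.
exists n; split => // m Pm; rewrite leqNgt; apply/negP => lt_mn.
by apply: no_smaller; exists m.
Qed.

Lemma is_least_equiv (P Q : nat -> Prop) n :
  (forall m, P m <-> Q m) -> is_least P n -> is_least Q n.
Proof. by move=> PQ [Pn leastP]; split=> [|m /PQ]; [apply/PQ | apply: leastP]. Qed.

Lemma proper_colourable_double_order (T : finType) (e : rel T) :
  proper_k_colourable e (#|T| + #|T|).
Proof.
exists (fun x y => enum_rank x + enum_rank y); split.
  move=> x y _; split; first exact: addnC.
  by rewrite -addSn leq_add // ltnW.
move=> x y z _ _ neq_yz; rewrite eqn_add2l.
by apply: contra neq_yz => /eqP/val_inj/enum_rank_inj ->.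
Qed.

Definition diameter_le2 (T : finType) (e : rel T) : Prop :=
  forall u v, u != v -> ~~ e u v -> exists2 w, e u w & e w v.

Section SimpleGraph.
Variables (T : finType) (e : rel T).
Hypotheses (e_sym : symmetric e) (e_irr : irreflexive e).

Lemma adj_neq x y : e x y -> x != y.
Proof. by apply: contraTneq => ->; rewrite e_irr. Qed.

Lemma ore_common_neighbour u v :
  u != v -> ~~ e u v -> #|T| - 1 <= deg e u + deg e v ->
  exists2 w, e u w & e w v.
Proof.
move=> neq_uv nadj_uv ore.
set Nu := [set w | e u w]; set Nv := [set w | e v w].
have [disjN | [w]] := set_0Vmem (Nu :&: Nv); last first.
  by rewrite !inE => /andP[euw evw]; exists w; rewrite // e_sym.
have v_out : v \notin Nu :|: Nv by rewrite !inE e_irr (negbTE nadj_uv).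
have u_out : u \notin v |: (Nu :|: Nv).
  by rewrite !inE e_irr e_sym (negbTE nadj_uv) (negbTE neq_uv).
have := max_card (u |: (v |: (Nu :|: Nv))).
rewrite cardsU1 u_out cardsU1 v_out cardsU disjN cards0 subn0.
by move: ore; rewrite /deg -/Nu -/Nv; lia.
Qed.

Lemma proper_colouring_rainbow_connected k (c : T -> T -> nat) :
  diameter_le2 e -> edge_colouring e k c -> proper_colouring e c ->
  rainbow_connected e c.
Proof.
move=> diam2 col proper u v neq_uv.
have [adj_uv | nadj_uv] := boolP (e u v).
  by exists [:: v]; split; rewrite /= ?adj_uv ?inE ?andbT.
have [w euw ewv] := diam2 u v neq_uv nadj_uv.
exists [:: w; v]; split; rewrite /= ?euw ?ewv //.
  by rewrite !inE negb_or adj_neq // neq_uv adj_neq.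
rewrite inE andbT (proj1 (col _ _ euw)).
by apply: proper; rewrite // e_sym.
Qed.

Lemma proper_rainbow_colourableE k :
  diameter_le2 e -> proper_rainbow_k_colourable e k <-> proper_k_colourable e k.
Proof.
move=> diam2; split=> [[c [col proper _]] | [c [col proper]]]; exists c => //.
by split=> //; apply: proper_colouring_rainbow_connected col proper.
Qed.

End SimpleGraph.

Theorem proposition5p9 (T : finType) (e : rel T) :
  simple_graph e ->
  3 <= #|T| ->
  (forall u v : T, u != v -> ~~ e u v -> #|T| - 1 <= deg e u + deg e v) ->
  exists k : nat, is_chromatic_index e k /\ is_proper_rainbow_connection_number e k.
Proof.
move=> [e_sym e_irr] _ ore.
have diam2 : diameter_le2 e.
  move=> u v neq_uv nadj_uv.
  exact: (ore_common_neighbour e_sym e_irr neq_uv nadj_uv (ore u v neq_uv nadj_uv)).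
have [k chi'_k] := is_least_exists (proper_colourable_double_order e).
exists k; split => //; apply: is_least_equiv chi'_k => m.
by rewrite proper_rainbow_colourableE.
Qed.
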